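(* Let $m,n,u\in\mathbb{R}$ with $n\neq0$, and let $(G_2,g,J)$ be the three-dimensional Lorentzian Lie group described in the context. Write $\mathbb{V}_{RC}$ for the real vector space of left-invariant Ricci collineations $\xi=\lambda_1\overline{e}_1+\lambda_2\overline{e}_2+\lambda_3\overline{e}_3$ ($\lambda_i\in\mathbb{R}$ constants) associated to the Yano connection. Then $(G_2,g,J)$ admits a nonzero left-invariant Ricci collineation if and only if one of the following holds: (1) $m=0$; in this case $\xi$ is a left-invariant Ricci collineation iff $\lambda_1=0$ and $n\lambda_2=u\lambda_3$, and $\mathbb{V}_{RC}=\langle \frac{u}{n}\overline{e}_2+\overline{e}_3\rangle$; (2) $m\neq0$ and $u=\frac14 m$; in this case $\xi$ is a left-invariant Ricci collineation iff $\lambda_1=0$ and $\lambda_2=-\frac{nu}{n^2+2u^2}\lambda_3$, and $\mathbb{V}_{RC}=\langle -\frac{nu}{n^2+2u^2}\overline{e}_2+\overline{e}_3\rangle$.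
   Context: $G_2$ is a connected three-dimensional Lie group whose Lie algebra has a basis $\{\overline{e}_1,\overline{e}_2,\overline{e}_3\}$ (left-invariant vector fields) with $[\overline{e}_1,\overline{e}_2]=n\overline{e}_2-u\overline{e}_3$, $[\overline{e}_1,\overline{e}_3]=-u\overline{e}_2-n\overline{e}_3$, $[\overline{e}_2,\overline{e}_3]=m\overline{e}_1$, $n\neq0$. The metric $g$ is the left-invariant Lorentzian metric with $g(\overline{e}_1,\overline{e}_1)=g(\overline{e}_2,\overline{e}_2)=1$, $g(\overline{e}_3,\overline{e}_3)=-1$, $g(\overline{e}_i,\overline{e}_j)=0$ for $i\neq j$. $J$ is the left-invariant product structure with $J\overline{e}_1=\overline{e}_1$, $J\overline{e}_2=\overline{e}_2$, $J\overline{e}_3=-\overline{e}_3$. With $\nabla^{LC}$ the Levi-Civita connection of $g$, the Yano connection is $\nabla^{*}_XY=\nabla^{LC}_XY-\frac12(\nabla^{LC}_YJ)JX-\frac14[(\nabla^{LC}_XJ)JY-(\nabla^{LC}_{JX}J)Y]$; its curvature is $R^{*}(X,Y)Z=\nabla^{*}_X\nabla^{*}_YZ-\nabla^{*}_Y\nabla^{*}_XZ-\nabla^{*}_{[X,Y]}Z$; its Ricci tensor is $\mathrm{Ric}^{*}(X,Y)=-g(R^{*}(X,\overline{e}_1)Y,\overline{e}_1)-g(R^{*}(X,\overline{e}_2)Y,\overline{e}_2)+g(R^{*}(X,\overline{e}_3)Y,\overline{e}_3)$; and $\overline{\mathrm{Ric}^{*}}(X,Y)=\frac12(\mathrm{Ric}^{*}(X,Y)+\mathrm{Ric}^{*}(Y,X))$.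 For a left-invariant vector field $\xi$, $(\mathrm{L}_{\xi}\overline{\mathrm{Ric}^{*}})(X,Y)=\xi(\overline{\mathrm{Ric}^{*}}(X,Y))-\overline{\mathrm{Ric}^{*}}([\xi,X],Y)-\overline{\mathrm{Ric}^{*}}(X,[\xi,Y])$; $\xi$ is a left-invariant Ricci collineation if $\mathrm{L}_{\xi}\overline{\mathrm{Ric}^{*}}=0$. *)

(* vectors of the Lie algebra of G_2 are row vectors 'rV[R]_3
   (coordinates w.r.t. the left-invariant frame e1, e2, e3), R : realType. *)
From HB Require Import structures.
From mathcomp Require Import all_boot all_order all_algebra.
From mathcomp Require Import all_classical all_reals.
Set Implicit Arguments. Unset Strict Implicit. Unset Printing Implicit Defensive.
Import Order.TTheory GRing.Theory Num.Theory.
Local Open Scope ring_scope.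

Section G2.
Variable R : realType.
Variables m n u : R.

Definition vec := 'rV[R]_3.
Definition i1 : 'I_3 := @Ordinal 3 0 isT.
Definition i2 : 'I_3 := @Ordinal 3 1 isT.
Definition i3 : 'I_3 := @Ordinal 3 2 isT.
Definition e1 : vec := delta_mx 0 i1.
Definition e2 : vec := delta_mx 0 i2.
Definition e3 : vec := delta_mx 0 i3.
Definition c1 (X : vec) : R := X 0 i1.
Definition c2 (X : vec) : R := X 0 i2.
Definition c3 (X : vec) : R := X 0 i3.
Definition vec3 (l1 l2 l3 : R) : vec := l1 *: e1 + l2 *: e2 + l3 *: e3.

(* Lie bracket, bilinear extension of
   [e1,e2] = n e2 - u e3, [e1,e3] = -u e2 - n e3, [e2,e3] = m e1 *)
Definition br (X Y : vec) : vec :=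
  (c1 X * c2 Y - c2 X * c1 Y) *: (n *: e2 - u *: e3)
  + (c1 X * c3 Y - c3 X * c1 Y) *: (- u *: e2 - n *: e3)
  + (c2 X * c3 Y - c3 X * c2 Y) *: (m *: e1).

Definition g (X Y : vec) : R := c1 X * c1 Y + c2 X * c2 Y - c3 X * c3 Y.

Definition J (X : vec) : vec := c1 X *: e1 + c2 X *: e2 - c3 X *: e3.

(* Levi-Civita connection on left-invariant fields, via the Koszul formula
   2 g(nabla_X Y, Z) = g([X,Y],Z) - g([Y,Z],X) + g([Z,X],Y)
   and nabla_X Y = sum_k g(e_k,e_k) g(nabla_X Y, e_k) e_k. *)
Definition koszul (X Y Z : vec) : R := g (br X Y) Z - g (br Y Z) X + g (br Z X) Y.
Definition LC (X Y : vec) : vec :=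
  (koszul X Y e1 / 2) *: e1 + (koszul X Y e2 / 2) *: e2 - (koszul X Y e3 / 2) *: e3.

Definition LCJ (X Y : vec) : vec := LC X (J Y) - J (LC X Y).

Definition yano (X Y : vec) : vec :=
  LC X Y - (1/2) *: LCJ Y (J X) - (1/4) *: (LCJ X (J Y) - LCJ (J X) Y).

Definition curv (X Y Z : vec) : vec :=
  yano X (yano Y Z) - yano Y (yano X Z) - yano (br X Y) Z.

Definition ric (X Y : vec) : R :=
  - g (curv X e1 Y) e1 - g (curv X e2 Y) e2 + g (curv X e3 Y) e3.
Definition ricbar (X Y : vec) : R := (ric X Y + ric Y X) / 2.

(* Lie derivative of ricbar along a left-invariant xi, evaluated on
   left-invariant X, Y.  The term xi(ricbar(X,Y)) vanishes since ricbar(X,Y)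
   is constant for left-invariant X, Y. *)
Definition lie_ricbar (xi X Y : vec) : R :=
  0 - ricbar (br xi X) Y - ricbar X (br xi Y).

Definition ricci_coll (xi : vec) : Prop := forall X Y : vec, lie_ricbar xi X Y = 0.

End G2.

From HB Require Import structures.
From mathcomp Require Import all_boot all_order all_algebra.
From mathcomp Require Import all_classical all_reals.
From mathcomp Require Import ring.
Import Order.TTheory GRing.Theory Num.Theory.
Local Open Scope ring_scope.

(* Everything is evaluated on left-invariant fields, where the Levi-Civita
   and Yano connections, the curvature and the Ricci tensor are polynomial in
   the coordinates with respect to the frame e1, e2, e3.  The symmetrised Ricci
   tensor turns out to be
     -(n^2 + u^2) x1 y1 - (n^2 + m u) x2 y2 - (m n / 2) (x2 y3 + x3 y2),
   and its Lie derivative along xi vanishes iff lambda1 = 0 and two linear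
   equations in (lambda2, lambda3) hold, the second one multiplied by m.  For
   m = 0 only the first equation remains.  For m <> 0 the 2x2 system has
   determinant 2 n (u - m/4) (n^2 + u^2), so it has a nonzero solution exactly
   when u = m/4, where the two equations coincide. *)

Section Coordinates.
Context {R : realType}.
Implicit Types (X : vec R) (a b c k : R).

Lemma c1_vec3 a b c : c1 (vec3 a b c) = a.
Proof. by rewrite /c1 /vec3 /e1 /e2 /e3 !mxE /=; ring. Qed.
Lemma c2_vec3 a b c : c2 (vec3 a b c) = b.
Proof. by rewrite /c2 /vec3 /e1 /e2 /e3 !mxE /=; ring. Qed.
Lemma c3_vec3 a b c : c3 (vec3 a b c) = c.
Proof. by rewrite /c3 /vec3 /e1 /e2 /e3 !mxE /=; ring. Qed.

Lemma vec3_coord X : X = vec3 (c1 X) (c2 X) (c3 X).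
Proof.
apply/rowP => -[[|[|[|j]]] hj] //; rewrite !mxE /= ?mulr1 ?mulr0 ?addr0 ?add0r.
all: by congr (X _ _); apply: val_inj.
Qed.

Lemma e1_vec3 : e1 R = vec3 1 0 0.
Proof. by rewrite /vec3 scale1r !scale0r !addr0. Qed.
Lemma e2_vec3 : e2 R = vec3 0 1 0.
Proof. by rewrite /vec3 scale1r !scale0r add0r addr0. Qed.
Lemma e3_vec3 : e3 R = vec3 0 0 1.
Proof. by rewrite /vec3 scale1r !scale0r !add0r. Qed.

Lemma vec3D a b c (a' b' c' : R) :
  vec3 a b c + vec3 a' b' c' = vec3 (a + a') (b + b') (c + c').
Proof. by rewrite /vec3 !scalerDl addrACA (addrACA (a *: _)). Qed.

Lemma vec3N a b c : - vec3 a b c = vec3 (- a) (- b) (- c).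
Proof. by rewrite /vec3 !scaleNr !opprD. Qed.

Lemma vec3Z k a b c : k *: vec3 a b c = vec3 (k * a) (k * b) (k * c).
Proof. by rewrite /vec3 !scalerDr !scalerA. Qed.

Lemma line_vec_neq0 k : k *: e2 R + e3 R != 0.
Proof.
apply/eqP => /(congr1 (@c3 R)).
rewrite e2_vec3 e3_vec3 vec3Z vec3D c3_vec3 /c3 mxE mulr0 add0r.
by move/eqP; rewrite oner_eq0.
Qed.

Lemma on_lineP k X :
  (c1 X = 0 /\ c2 X = k * c3 X) <-> exists c, X = c *: (k *: e2 R + e3 R).
Proof.
rewrite e2_vec3 e3_vec3 vec3Z vec3D.
split=> [[h1 h2] | [c ->]]; last by rewrite vec3Z c1_vec3 c2_vec3 c3_vec3; split; ring.
by exists (c3 X); rewrite vec3Z {1}(vec3_coord X) h1 h2; congr vec3; ring.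
Qed.

End Coordinates.

Local Notation coordE := (c1_vec3, c2_vec3, c3_vec3).

Section YanoRicci.
Context {R : realType} (m n u : R).
Implicit Types (xi X Y : vec R).

Lemma g_vec3 (a b c a' b' c' : R) :
  g (vec3 a b c) (vec3 a' b' c') = a * a' + b * b' - c * c'.
Proof. by rewrite /g !coordE. Qed.

Lemma br_vec3 X Y :
  br m n u X Y =
  vec3 (m * (c2 X * c3 Y - c3 X * c2 Y))
       (n * (c1 X * c2 Y - c2 X * c1 Y) - u * (c1 X * c3 Y - c3 X * c1 Y))
       (- u * (c1 X * c2 Y - c2 X * c1 Y) - n * (c1 X * c3 Y - c3 X * c1 Y)).
Proof.
rewrite /br e1_vec3 e2_vec3 e3_vec3.
by rewrite !(vec3Z, vec3N, vec3D); congr vec3; ring.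
Qed.

Lemma J_vec3 X : J X = vec3 (c1 X) (c2 X) (- c3 X).
Proof.
by rewrite /J e1_vec3 e2_vec3 e3_vec3 !(vec3Z, vec3N, vec3D); congr vec3; ring.
Qed.

Lemma LC_vec3 X Y :
  LC m n u X Y =
  vec3 (m / 2 * (c2 X * c3 Y - c3 X * c2 Y) + n * (c2 X * c2 Y + c3 X * c3 Y))
       (m / 2 * (c1 X * c3 Y + c3 X * c1 Y) - n * c2 X * c1 Y - u * c1 X * c3 Y)
       (m / 2 * (c1 X * c2 Y + c2 X * c1 Y) + n * c3 X * c1 Y - u * c1 X * c2 Y).
Proof.
rewrite /LC /koszul e1_vec3 e2_vec3 e3_vec3 !br_vec3 /g !coordE.
by rewrite !(vec3Z, vec3N, vec3D); congr vec3; field.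
Qed.

Lemma LCJ_vec3 X Y :
  LCJ m n u X Y =
  vec3 (- m * c2 X * c3 Y - 2 * n * c3 X * c3 Y)
       ((2 * u - m) * c1 X * c3 Y)
       (m * (c1 X * c2 Y + c2 X * c1 Y) + 2 * n * c3 X * c1 Y - 2 * u * c1 X * c2 Y).
Proof.
rewrite /LCJ !LC_vec3 !J_vec3.
by rewrite !coordE !(vec3N, vec3D); congr vec3; field.
Qed.

Lemma yano_vec3 X Y :
  yano m n u X Y =
  vec3 (n * c2 X * c2 Y - m * c3 X * c2 Y)
       (u * c3 X * c1 Y - n * c2 X * c1 Y)
       (u * (c2 X * c1 Y - c1 X * c2 Y) - n * c1 X * c3 Y).
Proof.
rewrite /yano !LCJ_vec3 !LC_vec3 !J_vec3 !coordE.
by rewrite !(vec3Z, vec3N, vec3D); congr vec3; field.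
Qed.

Lemma ric_coord X Y :
  ric m n u X Y =
  - (n ^+ 2 + u ^+ 2) * c1 X * c1 Y - (n ^+ 2 + m * u) * c2 X * c2 Y
  - m * n * c2 X * c3 Y.
Proof.
rewrite /ric /curv e1_vec3 e2_vec3 e3_vec3 !br_vec3.
(* Inner [yano] terms first: a failed unification between two nested ones
   unfolds the whole connection and takes forever. *)
rewrite ![yano _ _ _ _ Y]yano_vec3 !coordE.
by rewrite !yano_vec3 !coordE !(vec3N, vec3D) !g_vec3; ring.
Qed.

Lemma ricbar_coord X Y :
  ricbar m n u X Y =
  - (n ^+ 2 + u ^+ 2) * c1 X * c1 Y - (n ^+ 2 + m * u) * c2 X * c2 Y
  - m * n / 2 * (c2 X * c3 Y + c3 X * c2 Y).
Proof. by rewrite /ricbar !ric_coord; field. Qed.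

Definition lie_coef12 xi := (n ^+ 2 + m * u / 2) * c2 xi + n * (m / 2 - u) * c3 xi.
Definition lie_coef13 xi := (n ^+ 2 + 2 * u ^+ 2) * c2 xi + n * u * c3 xi.

Lemma lie_ricbar_coord xi X Y :
  lie_ricbar m n u xi X Y =
  c1 xi * ((2 * n ^+ 3 + m * n * u) * c2 X * c2 Y - m * n * u * c3 X * c3 Y
           - u * (n ^+ 2 + m * u) * (c2 X * c3 Y + c3 X * c2 Y))
  - n * lie_coef12 xi * (c1 X * c2 Y + c2 X * c1 Y)
  + m * lie_coef13 xi / 2 * (c1 X * c3 Y + c3 X * c1 Y).
Proof.
rewrite /lie_ricbar !ricbar_coord !br_vec3 !coordE.
by rewrite /lie_coef12 /lie_coef13; field.
Qed.

End YanoRicci.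

Lemma sqrD_gt0 (R : realDomainType) (x y : R) : x != 0 -> 0 <= y -> 0 < x ^+ 2 + y.
Proof. by move=> x0 y0; rewrite ltr_wpDr // exprn_even_gt0 // x0 orbT. Qed.

Lemma mulr_eq_divP (F : fieldType) (a b x y : F) :
  a != 0 -> a * x = b * y <-> x = b / a * y.
Proof. by move=> a0; split=> [h | ->]; [apply: (mulfI a0); rewrite h | ]; field. Qed.

Section Collineations.
Context {R : realType} (m n u : R).
Hypothesis n0 : n != 0.
Implicit Types xi : vec R.

Lemma ricci_collP xi :
  ricci_coll m n u xi <->
  [/\ c1 xi = 0, lie_coef12 m n u xi = 0 & m * lie_coef13 n u xi = 0].
Proof.
split=> [coll | [h1 h12 h13] X Y]; last first.
  by rewrite lie_ricbar_coord h1 h12 h13; ring.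
have h1 : c1 xi = 0.
  transitivity ((lie_ricbar m n u xi (e2 R) (e2 R)
                 + lie_ricbar m n u xi (e3 R) (e3 R)) / (2 * n ^+ 3)).
    by rewrite !lie_ricbar_coord e2_vec3 e3_vec3 !coordE; field.
  by rewrite !coll addr0 mul0r.
split=> //.
  rewrite -[RHS](mulr0 (- n^-1)) -(coll (e1 R) (e2 R)) lie_ricbar_coord.
  by rewrite e1_vec3 e2_vec3 !coordE h1; field.
rewrite -[RHS](mulr0 2) -(coll (e1 R) (e3 R)) lie_ricbar_coord.
by rewrite e1_vec3 e3_vec3 !coordE h1; field.
Qed.

Lemma ricci_coll_eq0 (m0 : m != 0) (um : u != m / 4) xi : ricci_coll m n u xi -> xi = 0.
Proof.
move=> /ricci_collP[h1 h12 /eqP]; rewrite mulf_eq0 (negbTE m0) /= => /eqP h13.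
have det0 : 2 * n * (u - m / 4) * (n ^+ 2 + u ^+ 2) != 0.
  rewrite !mulf_neq0 ?pnatr_eq0 ?subr_eq0 //.
  by rewrite gt_eqF // sqrD_gt0 // sqr_ge0.
(* Cramer's rule for the system lie_coef12 xi = lie_coef13 xi = 0. *)
have h2 : c2 xi = 0.
  apply: (mulfI det0); rewrite mulr0.
  transitivity (n * u * lie_coef12 m n u xi - n * (m / 2 - u) * lie_coef13 n u xi).
    by rewrite /lie_coef12 /lie_coef13; field.
  by rewrite h12 h13 !mulr0 subrr.
have h3 : c3 xi = 0.
  apply: (mulfI det0); rewrite mulr0.
  transitivity ((n ^+ 2 + m * u / 2) * lie_coef13 n u xi
                - (n ^+ 2 + 2 * u ^+ 2) * lie_coef12 m n u xi).
    by rewrite /lie_coef12 /lie_coef13; field.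
  by rewrite h12 h13 !mulr0 subrr.
by rewrite (vec3_coord xi) h1 h2 h3 /vec3 !scale0r !addr0.
Qed.

Lemma ricci_coll_m0 (m0 : m = 0) xi :
  ricci_coll m n u xi <-> c1 xi = 0 /\ n * c2 xi = u * c3 xi.
Proof.
rewrite ricci_collP m0 mul0r.
have -> : lie_coef12 0 n u xi = n * (n * c2 xi - u * c3 xi).
  by rewrite /lie_coef12; ring.
split=> [[h1 /eqP] | [h1 h]]; last by split; rewrite // h subrr mulr0.
by rewrite mulf_eq0 (negbTE n0) subr_eq0 => /eqP h; split.
Qed.

Lemma ricci_coll_quarter (um : u = m / 4) xi :
  ricci_coll m n u xi <->
  c1 xi = 0 /\ c2 xi = - (n * u / (n ^+ 2 + 2 * u ^+ 2)) * c3 xi.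
Proof.
have coef : lie_coef12 m n u xi = lie_coef13 n u xi.
  by rewrite /lie_coef12 /lie_coef13 um; field.
have D0 : n ^+ 2 + 2 * u ^+ 2 != 0.
  by rewrite gt_eqF // sqrD_gt0 // mulr_ge0 // sqr_ge0.
have coef13P :
    lie_coef13 n u xi = 0 <-> c2 xi = - (n * u / (n ^+ 2 + 2 * u ^+ 2)) * c3 xi.
  rewrite /lie_coef13; split=> [h | ->]; last by field.
  by apply: (mulfI D0); rewrite -[LHS]subr0 -h; field.
rewrite ricci_collP coef.
split=> [[h1 /coef13P h2 _] | [h1 /coef13P h13]] //.
by split; rewrite // h13 mulr0.
Qed.

Lemma ricci_coll_m0_span (m0 : m = 0) xi :
  ricci_coll m n u xi <-> exists c, xi = c *: ((u / n) *: e2 R + e3 R).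
Proof. by rewrite -on_lineP ricci_coll_m0 // mulr_eq_divP. Qed.

Lemma ricci_coll_quarter_span (um : u = m / 4) xi :
  ricci_coll m n u xi <->
  exists c, xi = c *: ((- (n * u / (n ^+ 2 + 2 * u ^+ 2))) *: e2 R + e3 R).
Proof. by rewrite -on_lineP ricci_coll_quarter. Qed.

End Collineations.

Theorem theorem3p6 (R : realType) (m n u : R) (hn : n != 0) :
  ((exists xi : vec R, xi != 0 /\ ricci_coll m n u xi) <->
     (m = 0 \/ (m != 0 /\ u = m / 4)))
  /\ (m = 0 ->
        (forall l1 l2 l3 : R,
           ricci_coll m n u (vec3 l1 l2 l3) <-> (l1 = 0 /\ n * l2 = u * l3))
        /\ (forall xi : vec R,
              ricci_coll m n u xi <->
              exists c : R, xi = c *: ((u / n) *: e2 R + e3 R)))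
  /\ (m != 0 -> u = m / 4 ->
        (forall l1 l2 l3 : R,
           ricci_coll m n u (vec3 l1 l2 l3) <->
           (l1 = 0 /\ l2 = - (n * u / (n ^+ 2 + 2 * u ^+ 2)) * l3))
        /\ (forall xi : vec R,
              ricci_coll m n u xi <->
              exists c : R,
                xi = c *: ((- (n * u / (n ^+ 2 + 2 * u ^+ 2))) *: e2 R + e3 R))).
Proof.
split; [split | split].
- case=> xi [xi0 coll]; have [m0 | m0] := eqVneq m 0; [by left | right; split=> //].
  apply/eqP; apply: contraNT xi0 => um; apply/eqP.
  exact: ricci_coll_eq0 coll.
- case=> [m0 | [_ um]].
    exists ((u / n) *: e2 R + e3 R); split; first exact: line_vec_neq0.
    by rewrite ricci_coll_m0_span //; exists 1; rewrite scale1r.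
  exists ((- (n * u / (n ^+ 2 + 2 * u ^+ 2))) *: e2 R + e3 R).
  split; first exact: line_vec_neq0.
  by rewrite ricci_coll_quarter_span //; exists 1; rewrite scale1r.
- move=> m0; split=> [l1 l2 l3 | xi]; last exact: ricci_coll_m0_span.
  by rewrite ricci_coll_m0 // c1_vec3 c2_vec3 c3_vec3.
- move=> _ um; split=> [l1 l2 l3 | xi]; last exact: ricci_coll_quarter_span.
  by rewrite ricci_coll_quarter // c1_vec3 c2_vec3 c3_vec3.
Qed.
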